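(* Let $\mathcal{A}$ be a dual Banach algebra with a central approximate identity. If $\mathcal{A}$ is Connes biprojective, then $\mathcal{A}$ is Johnson pseudo-Connes amenable.
   Context: A dual Banach algebra is a Banach algebra $\mathcal{A}$ together with a closed $\mathcal{A}$-submodule $\mathcal{A}_*$ of $\mathcal{A}^*$ such that $\mathcal{A}=(\mathcal{A}_* )^*$. A central approximate identity is a net $(e_\alpha)$ in $\mathcal{A}$ with $e_\alpha a=ae_\alpha$ for all $a$ and $e_\alpha a\to a$ in norm. For a bimodule $E$, $\sigma wc(E)$ is the set of $x\in E$ for which $a\mapsto a\cdot x$, $a\mapsto x\cdot a$ are weak$^*$-weak continuous. $\mathcal{A}\hat{\otimes}\mathcal{A}$ has actions $a\cdot(b\otimes c)=ab\otimes c$, $(b\otimes c)\cdot a=b\otimes ca$; duals carry the dual actions. $\pi_{\mathcal{A}}$ is the multiplication map $\mathcal{A}\hat{\otimes}\mathcal{A}\to\mathcal{A}$; $\pi_{\mathcal{A}}^*$ maps $\mathcal{A}_*$ into $\sigma wc((\mathcal{A}\hat{\otimes}\mathcal{A})^* )$ and its adjoint gives a bimodule map $\pi_{\sigma wc}:(\sigma wc((\mathcal{A}\hat{\otimes}\mathcal{A})^* ))^*\to\mathcal{A}$. $\mathcal{A}$ is Connes biprojective if there is a bounded $\mathcal{A}$-bimodule morphism $\rho:\mathcal{A}\to(\sigma wc((\mathcal{A}\hat{\otimes}\mathcal{A})^* ))^*$ with $\pi_{\sigma wc}\circ\rho=\mathrm{id}_{\mathcal{A}}$. With $i_{\mathcal{A}_*}:\mathcal{A}_*\hookrightarrow\mathcal{A}^*$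 the canonical embedding, $\mathcal{A}$ is Johnson pseudo-Connes amenable if there is a (not necessarily bounded) net $(m_\alpha)$ in $(\mathcal{A}\hat{\otimes}\mathcal{A})^{**}$ with $\langle T,a\cdot m_\alpha\rangle=\langle T,m_\alpha\cdot a\rangle$ for all $a\in\mathcal{A}$, $T\in\sigma wc((\mathcal{A}\hat{\otimes}\mathcal{A})^* )$, $\alpha$, and $i_{\mathcal{A}_*}^*\pi_{\mathcal{A}}^{**}(m_\alpha)a\to a$ for every $a\in\mathcal{A}$. *)

From HB Require Import structures.
From mathcomp Require Import all_boot all_algebra.
From mathcomp Require Import all_classical all_reals all_analysis.
From mathcomp Require Export complex.
Import numFieldNormedType.Exports.

Set Implicit Arguments.
Unset Strict Implicit.
Unset Printing Implicit Defensive.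
Import GRing.Theory Num.Theory.
Local Open Scope ring_scope.
Local Open Scope classical_set_scope.

(* The underlying Banach space is V (completeness is imposed in the theorem
   by taking V : completeNormedModType); the product is [bmul]. *)
Record banach_algebra (K : numFieldType) (V : normedModType K) := BanachAlgebra {
  bmul : V -> V -> V;
  bmulA : forall x y z, bmul x (bmul y z) = bmul (bmul x y) z;
  bmul_linl : forall (c : K) x y z, bmul (c *: x + y) z = c *: bmul x z + bmul y z;
  bmul_linr : forall (c : K) x y z, bmul x (c *: y + z) = c *: bmul x y + bmul x z;
  bmul_norm : forall x y, `|bmul x y| <= `|x| * `|y|
}.

Section DualBanach.
Variables (K : numFieldType) (V : normedModType K) (A : banach_algebra V).
Local Notation mul := (bmul A).

Definition directed (I : Type) (le : I -> I -> Prop) :=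
  [/\ (forall i, le i i), (forall i j k, le i j -> le j k -> le i k),
      (exists i : I, True) & (forall i j, exists k, le i k /\ le j k)].

Definition net_cvg (I : Type) (le : I -> I -> Prop) (x : I -> V) (l : V) :=
  forall e : K, 0 < e -> exists i0, forall i, le i0 i -> `|x i - l| < e.

Definition lin_fun (phi : V -> K) :=
  forall (c : K) x y, phi (c *: x + y) = c * phi x + phi y.
Definition bnd_fun (phi : V -> K) (D : K) := forall x, `|phi x| <= D * `|x|.
Definition dual_elt (phi : V -> K) := lin_fun phi /\ exists D, bnd_fun phi D.

(* ----- (A \hat\otimes A)^* = bounded bilinear forms on A x A ----- *)
Definition bil (T : V -> V -> K) :=
  (forall (c : K) x y z, T (c *: x + y) z = c * T x z + T y z) /\
  (forall (c : K) x y z, T x (c *: y + z) = c * T x y + T x z).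
Definition bnd_bil (T : V -> V -> K) (D : K) :=
  forall x y, `|T x y| <= D * `|x| * `|y|.
Definition tdual (T : V -> V -> K) := bil T /\ exists D, bnd_bil T D.

Definition bil_comb (c : K) (T S : V -> V -> K) : V -> V -> K :=
  fun x y => c * T x y + S x y.

Definition lin_on (P : (V -> V -> K) -> Prop) (M : (V -> V -> K) -> K) :=
  forall c T S, P T -> P S -> M (bil_comb c T S) = c * M T + M S.
Definition bnd_on (P : (V -> V -> K) -> Prop) (M : (V -> V -> K) -> K) (C : K) :=
  forall T D, P T -> 0 <= D -> bnd_bil T D -> `|M T| <= C * D.

Definition bidual (M : (V -> V -> K) -> K) :=
  lin_on tdual M /\ exists C, bnd_on tdual M C.

(* Dual module actions on (A \hat\otimes A)^*:
   <a.T, b(x)c> = <T, b(x)ca>,  <T.a, b(x)c> = <T, ab(x)c>. *)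
Definition lact_t (a : V) (T : V -> V -> K) : V -> V -> K := fun b c => T b (mul c a).
Definition ract_t (T : V -> V -> K) (a : V) : V -> V -> K := fun b c => T (mul a b) c.

Definition pi_star (phi : V -> K) : V -> V -> K := fun b c => phi (mul b c).

(* ----- dual Banach algebra with predual Ast = A_* ----- *)
Definition dual_banach_algebra (Ast : (V -> K) -> Prop) :=
      (forall phi, Ast phi -> dual_elt phi) /\
      Ast (fun _ => 0) /\
      (forall c phi psi, Ast phi -> Ast psi -> Ast (fun x => c * phi x + psi x)) /\
      (forall phi, dual_elt phi ->
         (forall e : K, 0 < e -> exists psi, Ast psi /\ bnd_fun (fun x => phi x - psi x) e) ->
         Ast phi) /\
      (forall a phi, Ast phi -> Ast (fun b => phi (mul b a)) /\ Ast (fun b => phi (mul a b))) /\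
      (* the canonical map A -> (A_* )^*, a |-> (phi |-> phi a), is isometric ... *)
      (forall a, (forall phi, Ast phi -> bnd_fun phi 1 -> `|phi a| <= `|a|) /\
                 (forall e : K, 0 < e -> exists phi, [/\ Ast phi, bnd_fun phi 1 & `|a| - e < `|phi a|])) /\
    (* ... and onto the bounded linear functionals on A_* *)
      (forall F : (V -> K) -> K,
         (forall c phi psi, Ast phi -> Ast psi -> F (fun x => c * phi x + psi x) = c * F phi + F psi) ->
         (exists C, forall phi D, Ast phi -> 0 <= D -> bnd_fun phi D -> `|F phi| <= C * D) ->
         exists a, forall phi, Ast phi -> F phi = phi a).

Definition wstar_cvg (Ast : (V -> K) -> Prop) (F : set_system V) (a : V) :=
  forall phi, Ast phi -> forall e : K, 0 < e -> F [set x | `|phi x - phi a| < e].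

(* f : A -> (A \hat\otimes A)^* is weak*-weak continuous: the image of any
   filter converging weak* to a converges to f a in sigma(E, E^* ), where
   E = (A \hat\otimes A)^* and E^* = (A \hat\otimes A)^** *)
Definition wsw_cont (Ast : (V -> K) -> Prop) (f : V -> (V -> V -> K)) :=
  forall (F : set_system V), Filter F -> forall a, wstar_cvg Ast F a ->
    forall Lam, bidual Lam -> forall e : K, 0 < e ->
      F [set x | `|Lam (f x) - Lam (f a)| < e].

Definition sigma_wc (Ast : (V -> K) -> Prop) (T : V -> V -> K) :=
  [/\ tdual T, wsw_cont Ast (fun a => lact_t a T) & wsw_cont Ast (fun a => ract_t T a)].

Definition has_central_approx_id :=
  exists (I : Type) (le : I -> I -> Prop) (e : I -> V),
    [/\ directed le, (forall i a, mul (e i) a = mul a (e i))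
      & forall a, net_cvg le (fun i => mul (e i) a) a].

(* rho a is an element of (sigma wc((A\hat\otimes A)^* ))^*, seen as a function
   on bilinear forms that only matters on sigma_wc.  Module actions on the
   dual: (a.u)(T) = u(T.a), (u.a)(T) = u(a.T).  pi_{sigma wc}(u) is the
   element of A = (A_* )^* given by phi |-> u(pi^* phi). *)
Definition connes_biprojective (Ast : (V -> K) -> Prop) :=
  exists rho : V -> ((V -> V -> K) -> K),
    (forall (c : K) a b T, sigma_wc Ast T -> rho (c *: a + b) T = c * rho a T + rho b T) /\
        (forall a, lin_on (sigma_wc Ast) (rho a)) /\
        (exists C, forall a T D, sigma_wc Ast T -> 0 <= D -> bnd_bil T D ->
                      `|rho a T| <= C * `|a| * D) /\
        (forall a b T, sigma_wc Ast T -> rho (mul a b) T = rho b (ract_t T a)) /\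
        (forall a b T, sigma_wc Ast T -> rho (mul b a) T = rho b (lact_t a T)) /\
      (forall a phi, Ast phi -> rho a (pi_star phi) = phi a).

(* m i in (A\hat\otimes A)^**; <T, a.m> = m(T.a), <T, m.a> = m(a.T);
   b i is the element of A = (A_* )^* equal to i^* pi^** (m i), i.e.
   phi (b i) = (m i)(pi^* phi) for phi in A_*. *)
Definition johnson_pseudo_connes_amenable (Ast : (V -> K) -> Prop) :=
  exists (I : Type) (le : I -> I -> Prop) (m : I -> ((V -> V -> K) -> K)) (b : I -> V),
    [/\ directed le,
        (forall i, bidual (m i)),
        (forall i a T, sigma_wc Ast T -> m i (ract_t T a) = m i (lact_t a T)),
        (forall i phi, Ast phi -> m i (pi_star phi) = phi (b i))
      & forall a, net_cvg le (fun i => mul (b i) a) a].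

End DualBanach.

(** For [e] in the central approximate identity, [rho e] is a bounded
    functional on sigma wc((A ⊗ A)^* ), which Hahn-Banach extends to some [m_e]
    in (A ⊗ A)^**.  Since sigma wc((A ⊗ A)^* ) is stable under both module
    actions and contains pi^*(A_* ), the bimodule property of [rho] together
    with [e a = a e] gives [a.m_e = m_e.a] on it, and [pi_{sigma wc} rho = id]
    says that i^* pi^** maps [m_e] to [e]; the approximate identity does the
    rest.

    Hahn-Banach is proved by Zorn's lemma for real spaces and transferred to
    complex ones through [F x = Re f x - i Re f (i x)].  Domination is by a
    relation [B x D] (D bounds x) rather than a sublinear functional, because
    the norm of (A ⊗ A)^* is only available through its bounds. *)

From HB Require Import structures.
From mathcomp Require Import all_boot all_order all_algebra.
From mathcomp Require Import all_classical all_reals all_analysis.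
From mathcomp Require Import complex ring lra.

Set Implicit Arguments.
Unset Strict Implicit.
Unset Printing Implicit Defensive.
Import Order.TTheory GRing.Theory Num.Theory.
Local Open Scope ring_scope.
Local Open Scope classical_set_scope.

Section Subspace.
Variables (K : pzRingType) (E : lmodType K).
Implicit Types (S : set E) (g : E -> K).

Definition linear_subspace S := S 0 /\ forall a x y, S x -> S y -> S (a *: x + y).

Definition linear_on S g :=
  forall a x y, S x -> S y -> g (a *: x + y) = a * g x + g y.

Lemma linear_subspaceZ S a x : linear_subspace S -> S x -> S (a *: x).
Proof. by move=> [S0 SC] Sx; rewrite -[a *: x]addr0; apply: SC. Qed.

Lemma linear_subspaceD S x y : linear_subspace S -> S x -> S y -> S (x + y).
Proof. by move=> [_ SC] Sx Sy; rewrite -[x]scale1r; apply: SC. Qed.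

Lemma linear_subspaceB S x y : linear_subspace S -> S x -> S y -> S (x - y).
Proof. by move=> [_ SC] Sx Sy; rewrite addrC -scaleN1r; apply: SC. Qed.

Lemma linear_on0 S g : S 0 -> linear_on S g -> g 0 = 0.
Proof.
move=> S0 glin; have := glin 1 0 0 S0 S0.
by rewrite scale1r addr0 mul1r -{1}[g 0]addr0 => /addrI.
Qed.

Lemma linear_onZ S g a x : linear_subspace S -> S x -> linear_on S g -> g (a *: x) = a * g x.
Proof. by move=> [S0 _] Sx glin; rewrite -[a *: x]addr0 glin // (linear_on0 S0 glin) addr0. Qed.

Lemma linear_onD S g x y : S x -> S y -> linear_on S g -> g (x + y) = g x + g y.
Proof. by move=> Sx Sy glin; rewrite -{1}[x]scale1r glin // mul1r. Qed.

End Subspace.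

Section DominatedExtension.
Variables (R : realType) (E : lmodType R).
Variables (Dom P : set E) (B : E -> R -> Prop) (f : E -> R).
Hypotheses (Dom_subspace : linear_subspace Dom) (P_subspace : linear_subspace P)
  (P_Dom : P `<=` Dom).
Hypotheses (boundD : forall x y D1 D2, B x D1 -> B y D2 -> B (x + y) (D1 + D2))
  (boundZ : forall t x D, 0 < t -> B x D -> B (t *: x) (t * D))
  (bound_exists : forall x, Dom x -> exists D, B x D).

Definition dominated (S : set E) (g : E -> R) := forall x D, S x -> B x D -> g x <= D.

Hypotheses (f_linear : linear_on P f) (f_dominated : dominated P f).

Record partial_extension := PartialExtension {
  pdom : set E;
  pfun : E -> R;
  P_pdom : P `<=` pdom;
  pdom_Dom : pdom `<=` Dom;
  pdom_subspace : linear_subspace pdom;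
  pfun_linear : linear_on pdom pfun;
  pfun_dominated : dominated pdom pfun;
  pfun_f : forall x, P x -> pfun x = f x }.

Definition extends (s t : partial_extension) :=
  pdom s `<=` pdom t /\ forall x, pdom s x -> pfun t x = pfun s x.

Definition trivial_extension :=
  @PartialExtension P f (fun _ => id) P_Dom P_subspace f_linear f_dominated
    (fun _ _ => erefl).

Section ChainUnion.
Variables (Ch : set partial_extension) (s0 : partial_extension).
Hypotheses (Ch_total : total_on Ch extends) (Ch_s0 : Ch s0).

Let udom := [set x | exists2 s, Ch s & pdom s x].
Let uval x r := exists s, [/\ Ch s, pdom s x & pfun s x = r].
Let ufun x := xget 0 (uval x).

Lemma chain_common s t x y : Ch s -> Ch t -> pdom s x -> pdom t y ->
  exists u, [/\ Ch u, pdom u x, pdom u y, pfun u x = pfun s x & pfun u y = pfun t y].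
Proof.
move=> Chs Cht sx ty; have [[st stf]|[ts tsf]] := Ch_total Chs Cht.
- by exists t; split => //; [apply: st | apply: stf].
- by exists s; split => //; [apply: ts | apply: tsf].
Qed.

Lemma ufunE s x : Ch s -> pdom s x -> ufun x = pfun s x.
Proof.
move=> Chs sx; apply: xget_unique; first by exists s.
move=> _ [t [Cht tx <-]].
by have [u [_ _ _ <- <-]] := chain_common Cht Chs tx sx.
Qed.

Lemma union_subspace : linear_subspace udom.
Proof.
split; first by exists s0 => //; have [] := pdom_subspace s0.
move=> a x y [s Chs sx] [t Cht ty].
have [u [Chu ux uy _ _]] := chain_common Chs Cht sx ty.
by exists u => //; have [_] := pdom_subspace u; apply.
Qed.

Definition chain_union : partial_extension.
refine (@PartialExtension udom ufun _ _ union_subspace _ _ _).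
- by move=> x Px; exists s0 => //; apply: P_pdom.
- by move=> x [s _ sx]; apply: pdom_Dom sx.
- move=> a x y [s Chs sx] [t Cht ty].
  have [u [Chu ux uy _ _]] := chain_common Chs Cht sx ty.
  have uS := pdom_subspace u.
  rewrite !(ufunE Chu) //; first exact: pfun_linear.
  by case: uS => _; apply.
- by move=> x D [s Chs sx] Bx; rewrite (ufunE Chs sx); apply: pfun_dominated.
- by move=> x Px; rewrite (ufunE Ch_s0) ?pfun_f //; apply: P_pdom.
Defined.

Lemma chain_union_ub s : Ch s -> extends s chain_union.
Proof. by move=> Chs; split => [x sx|x sx]; [exists s | exact: ufunE]. Qed.

End ChainUnion.

Section OneStepExtension.
Variables (s : partial_extension) (y : E).
Hypotheses (Dom_y : Dom y) (pdom_y : ~ pdom s y).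

Let Q := pdom s.
Let g := pfun s.
Let Q_subspace : linear_subspace Q := pdom_subspace s.
Let g_linear : linear_on Q g := @pfun_linear s.
Let g_dominated : dominated Q g := @pfun_dominated s.

Lemma lower_le_upper x1 x2 D1 D2 : Q x1 -> Q x2 -> B (x1 - y) D1 -> B (x2 + y) D2 ->
  g x1 - D1 <= D2 - g x2.
Proof.
move=> Qx1 Qx2 B1 B2; have := boundD B1 B2.
rewrite addrACA addNr addr0 => B12.
have := g_dominated (linear_subspaceD Q_subspace Qx1 Qx2) B12.
rewrite (linear_onD Qx1 Qx2 g_linear); lra.
Qed.

Let lower := [set r | exists x D, [/\ Q x, B (x - y) D & r = g x - D]].
(* Any [c] between the lower bounds [g x - D] and the upper bounds [D' - g x']
   makes [x + t y |-> g x + t c] dominated; we take the supremum. *)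
Let c := sup lower.

Lemma lower_has_sup : has_sup lower.
Proof.
have [Q0 _] := Q_subspace.
have [D1 B1] : exists D, B (0 - y) D.
  by apply/bound_exists/(linear_subspaceB Dom_subspace) => //; case: Dom_subspace.
have [D2 B2] : exists D, B (0 + y) D by apply: bound_exists; rewrite add0r.
split; first by exists (g 0 - D1), 0, D1.
by exists (D2 - g 0) => _ [x [D [Qx Bx ->]]]; exact: lower_le_upper Qx Q0 Bx B2.
Qed.

Lemma lower_le_c x D : Q x -> B (x - y) D -> g x - D <= c.
Proof. by move=> Qx Bx; apply: sup_upper_bound lower_has_sup _ _; exists x, D. Qed.

Lemma c_le_upper x D : Q x -> B (x + y) D -> c <= D - g x.
Proof.
move=> Qx Bx; apply: ge_sup; first by case: lower_has_sup.
by move=> _ [x' [D' [Qx' Bx' ->]]]; exact: lower_le_upper Qx' Qx Bx' Bx.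
Qed.

Lemma decomposition_unique x1 x2 t1 t2 : Q x1 -> Q x2 ->
  x1 + t1 *: y = x2 + t2 *: y -> x1 = x2 /\ t1 = t2.
Proof.
move=> Qx1 Qx2 e12.
have t12 : t1 = t2.
  apply: contrapT => /eqP; rewrite -subr_eq0 => t12; apply: pdom_y.
  have -> : y = (t1 - t2)^-1 *: (x2 - x1).
    have -> : x2 - x1 = (t1 - t2) *: y.
      by rewrite scalerBl -(addrK (t2 *: y) x2) -e12 addrAC [x1 + _]addrC addrK.
    by rewrite scalerA mulVf ?scale1r.
  exact/(linear_subspaceZ _ Q_subspace)/(linear_subspaceB Q_subspace).
by move: e12; rewrite t12 => /addIr.
Qed.

Let Q' := [set x + t *: y | x in Q & t in [set: R]].
Let g' z := xget 0 [set r | exists x t, [/\ Q x, z = x + t *: y & r = g x + t * c]].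

Lemma g'E x t : Q x -> g' (x + t *: y) = g x + t * c.
Proof.
move=> Qx; apply: xget_unique; first by exists x, t.
move=> _ [x' [t' [Qx' /decomposition_unique e ->]]]; by have [->->] := e Qx Qx'.
Qed.

Lemma g'_dominated : dominated Q' g'.
Proof.
move=> _ D [x Qx [t _ <-]] Bz; rewrite g'E //.
have [t0|t_neq0] := eqVneq t 0.
  by move: Bz; rewrite t0 scale0r addr0 mul0r addr0; apply: g_dominated.
have [t_gt0|t_le0] := ltrP 0 t.
  have tV_gt0 : 0 < t^-1 by rewrite invr_gt0.
  have := boundZ tV_gt0 Bz; rewrite scalerDr scalerA mulVf // scale1r.
  move=> /(c_le_upper (linear_subspaceZ _ Q_subspace Qx)).
  rewrite (linear_onZ _ Q_subspace Qx g_linear) -mulrBr => /(ler_wpM2l (ltW t_gt0)).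
  by rewrite mulrA mulfV // mul1r; lra.
have nt_gt0 : 0 < - t by rewrite oppr_gt0 lt_neqAle t_neq0.
have ntV_gt0 : 0 < (- t)^-1 by rewrite invr_gt0.
have := boundZ ntV_gt0 Bz; rewrite scalerDr scalerA invrN mulNr mulVf // scaleN1r.
move=> /(lower_le_c (linear_subspaceZ _ Q_subspace Qx)).
rewrite (linear_onZ _ Q_subspace Qx g_linear) -mulrBr => /(ler_wpM2l (ltW nt_gt0)).
by rewrite mulrA mulrNN mulfV // mul1r; lra.
Qed.

Lemma one_step_extension : exists t, extends s t /\ pdom t y.
Proof.
have Q_Q' : Q `<=` Q' by move=> x Qx; exists x => //; exists 0 => //; rewrite scale0r addr0.
have g'_g : forall x, Q x -> g' x = g x.
  by move=> x Qx; rewrite -{1}[x]addr0 -(scale0r y) g'E // mul0r addr0.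
have Q'_subspace : linear_subspace Q'.
  split; first exact: Q_Q' (proj1 Q_subspace).
  move=> a _ _ [x1 Qx1 [t1 _ <-]] [x2 Qx2 [t2 _ <-]].
  exists (a *: x1 + x2); first by case: Q_subspace => _; apply.
  by exists (a * t1 + t2) => //; rewrite scalerDr addrACA scalerA scalerDl.
have g'_linear : linear_on Q' g'.
  move=> a _ _ [x1 Qx1 [t1 _ <-]] [x2 Qx2 [t2 _ <-]].
  have Qx12 : Q (a *: x1 + x2) by case: Q_subspace => _; apply.
  have -> : a *: (x1 + t1 *: y) + (x2 + t2 *: y) = a *: x1 + x2 + (a * t1 + t2) *: y.
    by rewrite scalerDr addrACA scalerA scalerDl.
  rewrite !g'E // g_linear //; ring.
have Q'_Dom : Q' `<=` Dom.
  move=> _ [x Qx [t _ <-]]; apply: linear_subspaceD Dom_subspace _ _.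
    exact: (@pdom_Dom s).
  exact: linear_subspaceZ.
have g'_f : forall x, P x -> g' x = f x.
  by move=> x Px; rewrite g'_g; [exact: pfun_f | exact: (@P_pdom s)].
have Q'_y : Q' y.
  by exists 0; [case: Q_subspace | exists 1; rewrite // scale1r add0r].
by exists (PartialExtension (subset_trans (@P_pdom s) Q_Q') Q'_Dom Q'_subspace g'_linear
  g'_dominated g'_f).
Qed.

End OneStepExtension.

Theorem dominated_extension : exists F : E -> R,
  [/\ linear_on Dom F, dominated Dom F & forall x, P x -> F x = f x].
Proof.
pose le s t := `[< extends s t >].
have le_refl s : le s s by apply/asboolP; split.
have le_trans r s t : le r s -> le s t -> le r t.
  move=> /asboolP [rs rsf] /asboolP [st stf]; apply/asboolP.
  by split => [x /rs /st // | x rx]; rewrite stf ?rsf //; apply: rs.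
have chain_ub Ch : total_on Ch le -> exists t, forall s, Ch s -> le s t.
  have [[s0 Chs0] Ch_total|Ch0 _] := pselect (Ch !=set0).
    have Ch_total' : total_on Ch extends.
      by move=> s t Chs Cht; have [] := Ch_total s t Chs Cht => /asboolP; [left | right].
    exists (chain_union Ch_total' Chs0) => s Chs; apply/asboolP.
    exact: chain_union_ub.
  by exists trivial_extension => s Chs; exfalso; apply: Ch0; exists s.
have [t t_max] := ZL_preorder trivial_extension le_refl le_trans chain_ub.
have Dom_pdom : Dom `<=` pdom t.
  move=> y Dom_y; apply: contrapT => t_y.
  have [u [tu u_y]] := one_step_extension Dom_y t_y.
  by have /asboolP [/(_ y u_y)] := t_max u (asboolT tu).
exists (pfun t); split.
- by move=> a x y Dx Dy; apply: pfun_linear; apply: Dom_pdom.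
- by move=> x D Dx; apply: pfun_dominated; apply: Dom_pdom.
- exact: pfun_f.
Qed.

End DominatedExtension.

Local Open Scope complex_scope.

Section Realification.
Variables (R : realType) (E : lmodType R[i]).

Definition realified : Type := E.
HB.instance Definition _ := GRing.Zmodule.on realified.

Definition real_scale (r : R) (x : realified) : realified := r%:C *: (x : E).

Lemma real_scaleA a b x : real_scale a (real_scale b x) = real_scale (a * b) x.
Proof. by rewrite /real_scale scalerA rmorphM. Qed.

Lemma real_scale1 : left_id 1 real_scale.
Proof. by move=> x; rewrite /real_scale scale1r. Qed.

Lemma real_scaleDr : right_distributive real_scale +%R.
Proof. by move=> a x y; rewrite /real_scale scalerDr. Qed.

Lemma real_scaleDl x : {morph real_scale^~ x : a b / a + b}.
Proof. by move=> a b; rewrite /real_scale rmorphD scalerDl. Qed.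

HB.instance Definition _ := GRing.Zmodule_isLmodule.Build R realified
  real_scaleA real_scale1 real_scaleDr real_scaleDl.

End Realification.

Section ComplexDominatedExtension.
Variables (R : realType) (E : lmodType R[i]).
Variables (Dom P : set E) (B : E -> R -> Prop) (f : E -> R[i]).
Hypotheses (Dom_subspace : linear_subspace Dom) (P_subspace : linear_subspace P)
  (P_Dom : P `<=` Dom).
Hypotheses (boundD : forall x y D1 D2, B x D1 -> B y D2 -> B (x + y) (D1 + D2))
  (boundZ : forall t x D, 0 < t -> B x D -> B (t%:C *: x) (t * D))
  (bound_rot : forall c x D, `|c| = 1 -> B x D -> B (c *: x) D)
  (bound_exists : forall x, Dom x -> exists D, B x D).
Hypotheses (f_linear : linear_on P f)
  (f_dominated : forall x D, P x -> B x D -> `|f x| <= D%:C).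

Let realified_subspace (S : set E) :
  linear_subspace S -> linear_subspace (S : set (realified E)).
Proof. by move=> [S0 SC]; split => // a x y; apply: SC. Qed.

Lemma rotation_to_norm (z : R[i]) : exists2 l : R[i], `|l| = 1 & l * z = `|z|.
Proof.
have [->|z_neq0] := eqVneq z 0; first by exists 1; rewrite ?normr1 ?mulr0 ?normr0.
exists (`|z| / z); last by rewrite divfK.
by rewrite normrM normfV normr_id mulfV // normr_eq0.
Qed.

Theorem complex_dominated_extension : exists F : E -> R[i],
  [/\ linear_on Dom F, (forall x D, Dom x -> B x D -> `|F x| <= D%:C)
    & forall x, P x -> F x = f x].
Proof.
have Re_f_linear : linear_on (P : set (realified E)) (fun x => complex.Re (f x)).
  move=> a x y Px Py; rewrite [f _](f_linear a%:C Px Py).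
  by case: (f x) (f y) => ? ? [? ?]; simpc.
have Re_f_dominated : @dominated R (realified E) B P (fun x => complex.Re (f x)).
  move=> x D Px Bx; rewrite -lecR; apply: le_trans (f_dominated Px Bx).
  by apply: le_trans (normc_ge_Re _); rewrite lecR ler_norm.
have [U [U_linear U_dominated U_f]] :=
  @dominated_extension R (realified E) Dom P B (fun x => complex.Re (f x))
    (realified_subspace Dom_subspace) (realified_subspace P_subspace) P_Dom
    boundD boundZ bound_exists Re_f_linear Re_f_dominated.
have Dom_i x : Dom x -> Dom ('i *: x) by apply: linear_subspaceZ.
have U_decomp c x y : Dom x -> Dom y ->
    U (c *: x + y) = complex.Re c * U x + complex.Im c * U ('i *: x) + U y.
  move=> Dx Dy; have -> : c *: x + y =
      (complex.Re c)%:C *: x + ((complex.Im c)%:C *: ('i *: x) + y) :> E.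
    by rewrite addrA scalerA -scalerDl mulrC -complexE.
  rewrite U_linear ?U_linear ?addrA //; first exact: Dom_i.
  exact: linear_subspaceD Dom_subspace (linear_subspaceZ _ Dom_subspace (Dom_i _ Dx)) Dy.
(* A complex-linear [F] is determined by its real part: [Im (F x) = - Re (F (i x))]. *)
pose F x := (U x)%:C - 'i * (U ('i *: x))%:C.
have F_linear : linear_on Dom F.
  move=> c x y Dx Dy; rewrite /F scalerDr scalerA !U_decomp //; try exact: Dom_i.
  rewrite [_ * c]mulrC ReiNIm ImiRe.
  by case: c => a b; apply/eqP; rewrite eq_complex /=; simpc; apply/eqP; ring.
exists F; split => //.
- move=> x D Dx Bx; have [l l1 lF] := rotation_to_norm (F x).
  have lx_bound : U (l *: x) <= D :=
    U_dominated _ _ (linear_subspaceZ _ Dom_subspace Dx) (bound_rot l1 Bx).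
  have -> : `|F x| = (U (l *: x))%:C.
    rewrite -[LHS]RRe_real ?normr_real // -lF.
    by rewrite -(linear_onZ _ Dom_subspace Dx F_linear) /F; simpc.
  by rewrite lecR.
- move=> x Px; have Pix : P ('i *: x) by apply: linear_subspaceZ.
  rewrite /F !U_f // (linear_onZ _ P_subspace Px f_linear) ['i * f x]mulrC.
  by rewrite ReiNIm rmorphN mulrN opprK -complexE.
Qed.

End ComplexDominatedExtension.

Lemma le_real_bound (R : realType) (u v D : R[i]) : 0 <= u -> 0 <= v ->
  u <= D * v -> u <= (Num.max (complex.Re D) 0)%:C * v.
Proof.
move=> u0 v0; rewrite -(RRe_real (ger0_real u0)) -(RRe_real (ger0_real v0)).
have : 0 <= complex.Re v by rewrite -ler0c RRe_real ?ger0_real.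
move: (complex.Re u) (complex.Re v) => a r r0.
rewrite -rmorphM !lecE /= => /andP [_]; case: D => p q /=; rewrite mulr0 subr0 => le_ap.
by rewrite eqxx /=; apply: le_trans le_ap _; rewrite ler_wpM2r // le_max lexx.
Qed.

Section BidualExtension.
Variables (R : realType) (V : normedModType R[i]).
Local Notation Form := (V -> V -> R[i]).
Implicit Types (T S : Form).

Lemma scale_add_formE c T S x y : (c *: T + S) x y = c * T x y + S x y.
Proof. by []. Qed.

Lemma bnd_bil_real T D : bnd_bil T D -> exists2 d : R, 0 <= d & bnd_bil T d%:C.
Proof.
move=> TD; exists (Num.max (complex.Re D) 0); first by rewrite le_max lexx orbT.
move=> x y; rewrite -mulrA; apply: le_real_bound; rewrite ?mulr_ge0 // mulrA.
exact: TD.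
Qed.

Lemma bnd_fun_real (phi : V -> R[i]) D :
  bnd_fun phi D -> exists2 d : R, 0 <= d & bnd_fun phi d%:C.
Proof.
move=> phiD; exists (Num.max (complex.Re D) 0); first by rewrite le_max lexx orbT.
by move=> x; apply: le_real_bound.
Qed.

Lemma bnd_bilD T S D1 D2 : bnd_bil T D1 -> bnd_bil S D2 -> bnd_bil (T + S) (D1 + D2).
Proof. by move=> TD SD x y; rewrite !mulrDl; apply: le_trans (ler_normD _ _) (lerD _ _). Qed.

Lemma bnd_bilZ T c D : bnd_bil T D -> bnd_bil (c *: T) (`|c| * D).
Proof.
move=> TD x y; rewrite -[(c *: T) x y]/(c * T x y) normrM -!mulrA ler_wpM2l //.
by rewrite mulrA.
Qed.

Lemma tdual_subspace : linear_subspace (@tdual _ V).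
Proof.
split.
  split; first by split=> *; rewrite mulr0 addr0.
  by exists 0 => x y; rewrite normr0 !mul0r.
move=> c T S [[T1 T2] [D1 TD1]] [[S1 S2] [D2 SD2]]; split.
  by split=> a x y z; rewrite !scale_add_formE ?T1 ?S1 ?T2 ?S2; ring.
by exists (`|c| * D1 + D2); apply/bnd_bilD/SD2/bnd_bilZ.
Qed.

Lemma bidual_extension (P : set Form) (f : Form -> R[i]) (c : R[i]) :
  P `<=` @tdual _ V -> linear_subspace P -> lin_on P f -> bnd_on P f c ->
  exists m, bidual m /\ forall T, P T -> m T = f T.
Proof.
move=> P_tdual P_subspace f_linear f_bounded.
pose k := complex.Re `|c|.
pose B T d := exists D : R, [/\ 0 <= D, bnd_bil T D%:C & d = k * D].
have [||||||m [m_linear m_bounded m_f]] :=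
  @complex_dominated_extension R [the lmodType R[i] of Form] (@tdual _ V) P B f
    tdual_subspace P_subspace P_tdual.
- move=> T S _ _ [D1 [D1_ge0 TD1 ->]] [D2 [D2_ge0 SD2 ->]].
  exists (D1 + D2); split; first exact: addr_ge0.
    rewrite rmorphD; exact: (bnd_bilD TD1 SD2).
  by rewrite mulrDr.
- move=> t T _ t_gt0 [D [D_ge0 TD ->]]; exists (t * D); split.
  + by rewrite mulr_ge0 // ltW.
  + have := bnd_bilZ t%:C TD.
    have t_ge0 : 0 <= t%:C by rewrite ler0c ltW.
    by rewrite (ger0_norm t_ge0) -rmorphM.
  + by rewrite mulrCA.
- move=> l T _ l1 [D [D_ge0 TD ->]]; exists D; split => //.
  by rewrite -[D%:C]mul1r -l1; exact: bnd_bilZ.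
- move=> T [_ [D TD]]; have [d d_ge0 Td] := bnd_bil_real TD.
  by exists (k * d), d.
- exact: f_linear.
- move=> T _ PT [D [D_ge0 TD ->]].
  have D_ge0' : 0 <= D%:C by rewrite ler0c.
  have fT := f_bounded T D%:C PT D_ge0' TD.
  have cD_ge0 : 0 <= c * D%:C := le_trans (normr_ge0 _) fT.
  apply: le_trans fT _; rewrite -[c * _]ger0_norm //.
  by rewrite normrM (ger0_norm D_ge0') -(RRe_real (normr_real c)) -rmorphM.
exists m; split=> //; split=> //; exists k%:C => T D T_tdual D_ge0 TD.
rewrite -(RRe_real (ger0_real D_ge0)) -rmorphM; apply: m_bounded T_tdual _.
exists (complex.Re D); split => //; first by rewrite -ler0c RRe_real ?ger0_real.
by rewrite RRe_real ?ger0_real.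
Qed.

End BidualExtension.

Section ModuleActions.
Variables (R : realType) (V : normedModType R[i]) (A : banach_algebra V).
Variable Ast : (V -> R[i]) -> Prop.
Local Notation Form := (V -> V -> R[i]).
Local Notation mul := (bmul A).
Implicit Types (T : Form) (Lam : Form -> R[i]).

Lemma bnd_bil_lact T D a : 0 <= D -> bnd_bil T D -> bnd_bil (lact_t A a T) (D * `|a|).
Proof.
move=> D_ge0 TD x y; apply: le_trans (TD _ _) _.
rewrite -!mulrA ler_wpM2l // mulrCA ler_wpM2l // mulrC; exact: bmul_norm.
Qed.

Lemma bnd_bil_ract T D a : 0 <= D -> bnd_bil T D -> bnd_bil (ract_t A T a) (D * `|a|).
Proof.
move=> D_ge0 TD x y; apply: le_trans (TD _ _) _.
rewrite -!mulrA ler_wpM2l // mulrA ler_wpM2r //; exact: bmul_norm.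
Qed.

Lemma tdual_lact T a : tdual T -> tdual (lact_t A a T).
Proof.
move=> [[T1 T2] [D TD]]; have [d d_ge0 Td] := bnd_bil_real TD; split.
  by split=> c x y z; rewrite /lact_t ?T1 // bmul_linl T2.
by exists (d%:C * `|a|); apply: bnd_bil_lact; rewrite ?ler0c.
Qed.

Lemma tdual_ract T a : tdual T -> tdual (ract_t A T a).
Proof.
move=> [[T1 T2] [D TD]]; have [d d_ge0 Td] := bnd_bil_real TD; split.
  by split=> c x y z; rewrite /ract_t ?T2 // bmul_linr T1.
by exists (d%:C * `|a|); apply: bnd_bil_ract; rewrite ?ler0c.
Qed.

Lemma bidual_lact Lam a : bidual Lam -> bidual (fun T => Lam (lact_t A a T)).
Proof.
move=> [Lam_linear [K LamK]]; split.
  by move=> c T S TT TS; apply: Lam_linear; apply: tdual_lact.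
exists (K * `|a|) => T D TT D_ge0 TD; rewrite -mulrA [`|a| * D]mulrC.
by apply: LamK; [exact: tdual_lact | exact: mulr_ge0 | exact: bnd_bil_lact].
Qed.

Lemma bidual_ract Lam a : bidual Lam -> bidual (fun T => Lam (ract_t A T a)).
Proof.
move=> [Lam_linear [K LamK]]; split.
  by move=> c T S TT TS; apply: Lam_linear; apply: tdual_ract.
exists (K * `|a|) => T D TT D_ge0 TD; rewrite -mulrA [`|a| * D]mulrC.
by apply: LamK; [exact: tdual_ract | exact: mulr_ge0 | exact: bnd_bil_ract].
Qed.

Lemma wsw_cont_cst T : wsw_cont Ast (fun=> T).
Proof. by move=> F F_filter a _ Lam _ e e_gt0; apply: filterE => x; rewrite subrr normr0. Qed.

Lemma wsw_cont_comp (f : V -> Form) (Phi : Form -> Form) : wsw_cont Ast f ->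
  (forall Lam, bidual Lam -> bidual (fun T => Lam (Phi T))) ->
  wsw_cont Ast (fun x => Phi (f x)).
Proof. by move=> f_cont Phi_bidual F F_filter a Fa Lam /Phi_bidual; apply: f_cont. Qed.

Lemma wsw_cont_precomp (f : V -> Form) (h : V -> V) : wsw_cont Ast f ->
  (forall phi, Ast phi -> Ast (fun x => phi (h x))) ->
  wsw_cont Ast (fun x => f (h x)).
Proof.
move=> f_cont h_Ast F F_filter a Fa Lam Lam_bidual e e_gt0.
apply: (f_cont (h @ F) _ (h a)) => // phi Ast_phi; exact: Fa _ (h_Ast _ Ast_phi).
Qed.

Lemma wsw_cont_comb c (f g : V -> Form) : (forall x, tdual (f x)) -> (forall x, tdual (g x)) ->
  wsw_cont Ast f -> wsw_cont Ast g -> wsw_cont Ast (fun x => bil_comb c (f x) (g x)).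
Proof.
move=> f_tdual g_tdual f_cont g_cont F F_filter a Fa Lam Lam_bidual e e_gt0.
have [Lam_linear _] := Lam_bidual.
have k_gt0 : 0 < `|c| + 1 by rewrite ltr_wpDl.
have e2_gt0 : 0 < e / 2 by rewrite divr_gt0.
have ek_gt0 : 0 < e / 2 / (`|c| + 1) by rewrite divr_gt0.
apply: filterS2 (f_cont F F_filter a Fa Lam Lam_bidual _ ek_gt0)
  (g_cont F F_filter a Fa Lam Lam_bidual _ e2_gt0) => x /= fx gx.
rewrite !Lam_linear // opprD addrACA -mulrBr (splitr e).
apply: le_lt_trans (ler_normD _ _) (ler_ltD _ gx); rewrite normrM.
apply: le_trans (ler_wpM2l (normr_ge0 c) (ltW fx)) _.
have c_le : `|c| <= `|c| + 1 by rewrite lerDl.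
apply: le_trans (ler_wpM2r (ltW ek_gt0) c_le) _.
by rewrite mulrC divfK ?gt_eqF.
Qed.

Lemma sigma_wc_subspace : linear_subspace (sigma_wc A Ast).
Proof.
have [tdual0 tdual_comb] := @tdual_subspace R V.
split; first by split; [exact: tdual0 | exact: (wsw_cont_cst 0) | exact: (wsw_cont_cst 0)].
move=> c T S [TT T_l T_r] [TS S_l S_r]; split; first exact: tdual_comb.
- by apply: wsw_cont_comb => // x; apply: tdual_lact.
- by apply: wsw_cont_comb => // x; apply: tdual_ract.
Qed.

Hypothesis predual_module : forall a phi, Ast phi ->
  Ast (fun b => phi (mul b a)) /\ Ast (fun b => phi (mul a b)).

Lemma sigma_wc_lact a T : sigma_wc A Ast T -> sigma_wc A Ast (lact_t A a T).
Proof.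
move=> [TT T_l T_r]; split; first exact: tdual_lact.
- have -> : (fun x => lact_t A x (lact_t A a T)) = (fun x => lact_t A (mul x a) T).
    by apply/funext => x; apply/funext => b; apply/funext => c; rewrite /lact_t bmulA.
  by apply: wsw_cont_precomp T_l _ => phi /(predual_module a) [].
- apply: (wsw_cont_comp (f := ract_t A T) (Phi := lact_t A a)) T_r _.
  by move=> Lam; apply: bidual_lact.
Qed.

Lemma sigma_wc_ract a T : sigma_wc A Ast T -> sigma_wc A Ast (ract_t A T a).
Proof.
move=> [TT T_l T_r]; split; first exact: tdual_ract.
- apply: (wsw_cont_comp (f := fun x => lact_t A x T) (Phi := ract_t A^~ a)) T_l _.
  by move=> Lam; apply: bidual_ract.
- have -> : (fun x => ract_t A (ract_t A T a) x) = (fun x => ract_t A T (mul a x)).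
    by apply/funext => x; apply/funext => b; apply/funext => c; rewrite /ract_t bmulA.
  by apply: wsw_cont_precomp T_r _ => phi /(predual_module a) [].
Qed.

Hypothesis predual_dual : forall phi, Ast phi -> dual_elt phi.
Hypothesis predual_onto : forall F : (V -> R[i]) -> R[i],
  (forall c phi psi, Ast phi -> Ast psi ->
     F (fun x => c * phi x + psi x) = c * F phi + F psi) ->
  (exists C, forall phi D, Ast phi -> 0 <= D -> bnd_fun phi D -> `|F phi| <= C * D) ->
  exists a, forall phi, Ast phi -> F phi = phi a.

Lemma bnd_bil_pi_star (phi : V -> R[i]) D :
  0 <= D -> bnd_fun phi D -> bnd_bil (pi_star A phi) D.
Proof.
move=> D_ge0 phiD x y; apply: le_trans (phiD _) _.
by rewrite -mulrA ler_wpM2l // bmul_norm.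
Qed.

Lemma tdual_pi_star phi : dual_elt phi -> tdual (pi_star A phi).
Proof.
move=> [phi_linear [D phiD]]; have [d d_ge0 phid] := bnd_fun_real phiD; split.
  by split=> c x y z; rewrite /pi_star ?bmul_linl ?bmul_linr phi_linear.
by exists d%:C; apply: bnd_bil_pi_star; rewrite ?ler0c.
Qed.

Lemma bidual_pi_star Lam : bidual Lam ->
  exists a, forall psi, Ast psi -> Lam (pi_star A psi) = psi a.
Proof.
move=> [Lam_linear [K LamK]]; apply: predual_onto.
  by move=> c phi psi /predual_dual ? /predual_dual ?; apply: Lam_linear; apply: tdual_pi_star.
exists K => phi D Ast_phi D_ge0 phiD; apply: LamK => //.
  exact/tdual_pi_star/predual_dual.
exact: bnd_bil_pi_star.
Qed.

Lemma sigma_wc_pi_star phi : Ast phi -> sigma_wc A Ast (pi_star A phi).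
Proof.
move=> Ast_phi; split; first exact/tdual_pi_star/predual_dual.
- move=> F F_filter a Fa Lam /bidual_pi_star [b Lamb] e e_gt0.
  have lact_pi x : lact_t A x (pi_star A phi) = pi_star A (fun y => phi (mul y x)).
    by apply/funext => u; apply/funext => v; rewrite /lact_t /pi_star bmulA.
  apply: filterS (Fa _ (predual_module b Ast_phi).2 e e_gt0) => x /=.
  by rewrite !lact_pi !Lamb //; apply: (predual_module _ Ast_phi).1.
- move=> F F_filter a Fa Lam /bidual_pi_star [b Lamb] e e_gt0.
  have ract_pi x : ract_t A (pi_star A phi) x = pi_star A (fun y => phi (mul x y)).
    by apply/funext => u; apply/funext => v; rewrite /ract_t /pi_star bmulA.
  apply: filterS (Fa _ (predual_module b Ast_phi).1 e e_gt0) => x /=.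
  by rewrite !ract_pi !Lamb //; apply: (predual_module _ Ast_phi).2.
Qed.

End ModuleActions.

Theorem proposition2p6 (R : realType) (V : completeNormedModType R[i])
    (A : banach_algebra V) (Ast : (V -> R[i]) -> Prop) :
  dual_banach_algebra A Ast ->
  has_central_approx_id A ->
  connes_biprojective A Ast ->
  johnson_pseudo_connes_amenable A Ast.
Proof.
move=> [Ast_dual [_ [_ [_ [Ast_module [_ Ast_onto]]]]]].
move=> [I [le [e [le_directed e_central e_approx]]]].
move=> [rho [_ [rho_linear [[c rho_bounded] [rho_ract [rho_lact rho_pi_star]]]]]].
have sigma_wc_tdual : sigma_wc A Ast `<=` @tdual _ V by move=> T [].
have m_exists i := bidual_extension sigma_wc_tdual (sigma_wc_subspace A Ast)
  (rho_linear (e i)) (rho_bounded (e i)).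
have [m /all_and2 [m_bidual m_rho]] := choice m_exists.
exists I, le, m, e; split => //.
- move=> i a T T_sigma.
  rewrite (m_rho i _ (sigma_wc_ract Ast_module a T_sigma)).
  rewrite (m_rho i _ (sigma_wc_lact Ast_module a T_sigma)).
  by rewrite -rho_ract // -rho_lact // e_central.
- move=> i phi Ast_phi.
  rewrite (m_rho i _ (sigma_wc_pi_star Ast_module Ast_dual Ast_onto Ast_phi)).
  exact: rho_pi_star.
Qed.
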